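(* For $n\ge1$ let $M_n$ be the smallest positive integer lying in the ideal $(1-\omega^n)\mathbb{Z}[\lambda]$. Then $M_n$ is even for every $n\ge1$, $M_n$ is divisible by $14$ whenever $n$ is even, and $M_n$ divides the norm $N(1-\omega^n)$. Moreover every periodic point $x$ of least period dividing $n$ of the scaling map $\gamma$ satisfies $x\in\frac{1}{M_n}\mathbb{Z}[\lambda]$.
   Context: Let $\lambda$ be the real root of $x^3+x^2+x-1$, $\omega=\lambda^3=1-\lambda-\lambda^2$; $\mathbb{Z}[\lambda]$ is the ring of integers of $\mathbb{Q}(\lambda)$ and $N$ is the field norm. Scaling map: put $N=7$ and the data (for $j=0,\dots,6$): $\tau_0=\lambda+\lambda^2$, $\tau_1=-1+3\lambda$, $\tau_2=\lambda-\lambda^2$, $\tau_3=-1+2\lambda+\lambda^2$, $\tau_4=1-\lambda-\lambda^2$, $\tau_5=\lambda-\lambda^2$, $\tau_6=-\lambda$; $(\nu_0,\dots,\nu_6)=(4,13,12,8,8,12,4)$; path function $p(j,t)$, $0\le t<\nu_j$, is the $(t+1)$-th entry of the list: $j=0$: $(0,6,3,6)$; $j=1$: $(0,6,3,6,1,6,2,5,6,1,6,3,6)$; $j=2$: $(0,6,3,6,1,6,2,5,6,2,4,6)$; $j=3$: $(0,6,3,6,1,6,3,6)$; $j=4$: $(0,6,4,5,6,2,4,6)$; $j=5$: $(0,6,4,5,6,2,5,6,1,6,3,6)$; $j=6$: $(0,6,4,6)$. Let $\mathcal{V}$ be the set of sequences $\sigma=((j_1,t_1),(j_2,t_2),\dots)$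 with $0\le j_k\le 6$, $0\le t_k<\nu_{j_k}$, $j_k=p(j_{k+1},t_{k+1})$ for all $k\ge1$, and which do not end in any of the tails $(1,9)^\infty,(2,6)^\infty,(3,2)^\infty,(4,6)^\infty,(5,3)^\infty,(6,1)^\infty$. Put $d_i=\sum_{t=0}^{t_i-1}\tau_{p(j_i,t)}$ and $x(\sigma)=\sum_{i\ge1}d_i\omega^{i-1}$; the map $\sigma\mapsto x(\sigma)$ is a bijection $\mathcal{V}\to[0,1)$. The scaling map $\gamma:[0,1)\to[0,1)$ is $\gamma(x)=(x-d_1)\omega^{-1}$, where $d_1$ is the first digit of the code of $x$. A point $x$ with $\gamma^n(x)=x$ has code $((j_1,t_1),\dots,(j_n,t_n))^\infty$ and equals $\frac{1}{1-\omega^n}\sum_{i=1}^n d_i\omega^{i-1}$. *)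

From Stdlib Require Import Reals Lra ZArith List ClassicalEpsilon.
From Coquelicot Require Import Coquelicot.
Import ListNotations.
Open Scope R_scope.

(** lambda: the real root of x^3 + x^2 + x - 1 (unique, since the cubic
    is strictly increasing). *)
Definition lam : R :=
  epsilon (inhabits 0%R) (fun x => x ^ 3 + x ^ 2 + x - 1 = 0).

Definition omega : R := lam ^ 3.

(** Elements of Z[lambda] are written a + b*lambda + c*lambda^2 with
    (a,b,c) in Z^3 ({1, lambda, lambda^2} is a Z-basis). *)
Definition Zl : Type := (Z * Z * Z)%type.

Definition evalZl (u : Zl) : R :=
  let '(a, b, c) := u in IZR a + IZR b * lam + IZR c * lam ^ 2.

(** Multiplication in Z[lambda], using lambda^3 = 1 - lambda - lambda^2
    and lambda^4 = -1 + 2 lambda. *)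
Definition Zl_mul (u v : Zl) : Zl :=
  let '(a0, a1, a2) := u in
  let '(b0, b1, b2) := v in
  let c0 := (a0 * b0)%Z in
  let c1 := (a0 * b1 + a1 * b0)%Z in
  let c2 := (a0 * b2 + a1 * b1 + a2 * b0)%Z in
  let c3 := (a1 * b2 + a2 * b1)%Z in
  let c4 := (a2 * b2)%Z in
  ((c0 + c3 - c4)%Z, (c1 - c3 + 2 * c4)%Z, (c2 - c3)%Z).

Definition Zl_one : Zl := (1%Z, 0%Z, 0%Z).
Definition Zl_lam : Zl := (0%Z, 1%Z, 0%Z).
Definition Zl_sub (u v : Zl) : Zl :=
  let '(a0, a1, a2) := u in let '(b0, b1, b2) := v in
  ((a0 - b0)%Z, (a1 - b1)%Z, (a2 - b2)%Z).

(** omega = 1 - lambda - lambda^2 as an element of Z[lambda] *)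
Definition Zl_omega : Zl := (1%Z, (-1)%Z, (-1)%Z).

Fixpoint Zl_pow (u : Zl) (n : nat) : Zl :=
  match n with O => Zl_one | S k => Zl_mul u (Zl_pow u k) end.

(** Field norm N_{Q(lambda)/Q}(u) = determinant of multiplication by u
    in the basis (1, lambda, lambda^2). *)
Definition det3 (c1 c2 c3 : Zl) : Z :=
  let '(a11, a21, a31) := c1 in
  let '(a12, a22, a32) := c2 in
  let '(a13, a23, a33) := c3 in
  (a11 * (a22 * a33 - a23 * a32)
   - a12 * (a21 * a33 - a23 * a31)
   + a13 * (a21 * a32 - a22 * a31))%Z.

Definition normZl (u : Zl) : Z :=
  det3 (Zl_mul u Zl_one) (Zl_mul u Zl_lam) (Zl_mul u (Zl_mul Zl_lam Zl_lam)).

Definition in_ideal (n : nat) (m : Z) : Prop :=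
  exists y : Zl, IZR m = (1 - omega ^ n) * evalZl y.

Definition is_Mn (n : nat) (M : Z) : Prop :=
  (0 < M)%Z /\ in_ideal n M /\
  forall m : Z, (0 < m)%Z -> in_ideal n m -> (M <= m)%Z.

Definition tau (j : nat) : Zl :=
  match j with
  | 0 => (0%Z, 1%Z, 1%Z)
  | 1 => ((-1)%Z, 3%Z, 0%Z)
  | 2 => (0%Z, 1%Z, (-1)%Z)
  | 3 => ((-1)%Z, 2%Z, 1%Z)
  | 4 => (1%Z, (-1)%Z, (-1)%Z)
  | 5 => (0%Z, 1%Z, (-1)%Z)
  | _ => (0%Z, (-1)%Z, 0%Z)
  end.

Definition nu (j : nat) : nat :=
  match j with
  | 0 => 4 | 1 => 13 | 2 => 12 | 3 => 8 | 4 => 8 | 5 => 12 | _ => 4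
  end.

Definition plist (j : nat) : list nat :=
  match j with
  | 0 => [0;6;3;6]%nat
  | 1 => [0;6;3;6;1;6;2;5;6;1;6;3;6]%nat
  | 2 => [0;6;3;6;1;6;2;5;6;2;4;6]%nat
  | 3 => [0;6;3;6;1;6;3;6]%nat
  | 4 => [0;6;4;5;6;2;4;6]%nat
  | 5 => [0;6;4;5;6;2;5;6;1;6;3;6]%nat
  | _ => [0;6;4;6]%nat
  end%nat.

(** path function p(j,t), 0 <= t < nu j : the (t+1)-th entry of plist j *)
Definition p (j t : nat) : nat := nth t (plist j) 0%nat.

(** A sequence sigma = ((j_1,t_1),(j_2,t_2),...) is encoded as
    sigma : nat -> nat * nat with sigma k = (j_{k+1}, t_{k+1}). *)
Definition forbidden_tails : list (nat * nat) :=
  [(1,9);(2,6);(3,2);(4,6);(5,3);(6,1)]%nat.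

Definition inV (sigma : nat -> nat * nat) : Prop :=
  (forall k, (fst (sigma k) <= 6)%nat /\ (snd (sigma k) < nu (fst (sigma k)))%nat) /\
  (forall k, fst (sigma k) = p (fst (sigma (S k))) (snd (sigma (S k)))) /\
  (forall jt, In jt forbidden_tails ->
     ~ exists K, forall k, (K <= k)%nat -> sigma k = jt).

Fixpoint digit_aux (j : nat) (t : nat) : R :=
  match t with
  | O => 0
  | S t' => digit_aux j t' + evalZl (tau (p j t'))
  end.

Definition digit (jt : nat * nat) : R := digit_aux (fst jt) (snd jt).

(** x(sigma) = sum_{i >= 1} d_i omega^{i-1} *)
Definition xval (sigma : nat -> nat * nat) : R :=
  Series (fun i => digit (sigma i) * omega ^ i).

(** The code of x in [0,1): the (unique) sigma in V with x(sigma) = x. *)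
Definition code (x : R) : nat -> nat * nat :=
  epsilon (inhabits (fun _ : nat => (0%nat, 0%nat)))
          (fun sigma => inV sigma /\ xval sigma = x).

Definition gamma (x : R) : R := (x - digit (code x 0%nat)) / omega.

(** The integers in the ideal (1 - omega^n) are a subgroup of Z containing
    the nonzero norm N(1 - omega^n) = (1 - omega^n) * adj(1 - omega^n), so
    M_n exists and divides every integer of the ideal, the norm included.
    The substitutions lambda |-> 1 mod 2 and lambda |-> 5 mod 7 are ring
    morphisms Z[lambda] -> Z/2 and Z[lambda] -> Z/7 (1 and 5 are roots of
    x^3 + x^2 + x - 1 there) sending omega to -1; hence 1 - omega^n, and with
    it every integer of the ideal, vanishes mod 2, and mod 7 when n is even.
    Finally gamma^n x = (x - z) / omega^n with z in Z[lambda], so a point of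
    period n satisfies x (1 - omega^n) = z; multiplying by the cofactor y of
    M_n = (1 - omega^n) y gives M_n x = z y. *)

From Stdlib Require Import Reals ZArith Morphisms Lra Lia.
From Stdlib Require Import ClassicalEpsilon Classical Wf_nat.
Open Scope R_scope.

(* The [eqm] morphisms of [Zdiv] are declared as section-local instances there. *)
#[local] Existing Instances eqm_setoid Zplus_eqm Zminus_eqm Zmult_eqm.

#[local] Instance Zpow_eqm (d : Z) : Proper (eqm d ==> eq ==> eqm d) Z.pow.
Proof.
  intros a b Hab k _ <-.
  destruct (Z_lt_le_dec k 0) as [Hk | Hk].
  - rewrite !Z.pow_neg_r by exact Hk. reflexivity.
  - revert k Hk. apply natlike_ind; [reflexivity|].
    intros k Hk IH. rewrite !Z.pow_succ_r by exact Hk. rewrite IH, Hab. reflexivity.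
Qed.

Lemma lam_root : lam ^ 3 + lam ^ 2 + lam - 1 = 0.
Proof.
  unfold lam; apply epsilon_spec.
  destruct (IVT (fun x => x ^ 3 + x ^ 2 + x - 1) 0 1) as [z [_ Hz]];
    [reg | lra | simpl; lra | simpl; lra | exists z; exact Hz].
Qed.

Lemma lam_bounds : 0 < lam < 1.
Proof. pose proof lam_root. split; nra. Qed.

Lemma omega_bounds : 0 < omega < 1.
Proof.
  pose proof lam_bounds. unfold omega.
  split; [apply pow_lt; lra | apply pow_lt_1_compat; [lra | lia]].
Qed.

Definition Zl_const (m : Z) : Zl := (m, 0%Z, 0%Z).

Definition Zl_add (u v : Zl) : Zl :=
  let '(a0, a1, a2) := u in let '(b0, b1, b2) := v in
  ((a0 + b0)%Z, (a1 + b1)%Z, (a2 + b2)%Z).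

Lemma evalZl_const m : evalZl (Zl_const m) = IZR m.
Proof. simpl; ring. Qed.

Lemma evalZl_add u v : evalZl (Zl_add u v) = evalZl u + evalZl v.
Proof.
  destruct u as [[a0 a1] a2], v as [[b0 b1] b2]; simpl; rewrite !plus_IZR; ring.
Qed.

Lemma evalZl_sub u v : evalZl (Zl_sub u v) = evalZl u - evalZl v.
Proof.
  destruct u as [[a0 a1] a2], v as [[b0 b1] b2]; simpl; rewrite !minus_IZR; ring.
Qed.

Lemma evalZl_mul u v : evalZl (Zl_mul u v) = evalZl u * evalZl v.
Proof.
  destruct u as [[a0 a1] a2], v as [[b0 b1] b2].
  (* lambda^4 - 2 lambda + 1 = (lambda - 1)(lambda^3 + lambda^2 + lambda - 1). *)
  transitivity (evalZl (a0, a1, a2) * evalZl (b0, b1, b2)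
    - (lam ^ 3 + lam ^ 2 + lam - 1)
      * (IZR (a1 * b2 + a2 * b1) + (lam - 1) * IZR (a2 * b2))).
  - cbv beta iota zeta delta [evalZl Zl_mul].
    repeat rewrite ?minus_IZR, ?plus_IZR, ?mult_IZR; ring.
  - rewrite lam_root; ring.
Qed.

Lemma evalZl_omega : evalZl Zl_omega = omega.
Proof. pose proof lam_root. unfold omega. simpl. lra. Qed.

Lemma evalZl_omega_pow n : evalZl (Zl_pow Zl_omega n) = omega ^ n.
Proof.
  induction n as [|n IH]; [simpl; ring|].
  change (evalZl (Zl_mul Zl_omega (Zl_pow Zl_omega n)) = omega ^ S n).
  rewrite evalZl_mul, IH, evalZl_omega. reflexivity.
Qed.

Definition norm_form (a b c : Z) : Z :=
  (c^3 + b*c^2 - b^2*c + b^3 + 3*a*c^2 - 4*a*b*c + a*b^2 - a^2*c - a^2*b + a^3)%Z.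

Lemma normZl_norm_form a b c : normZl (a, b, c) = norm_form a b c.
Proof. unfold norm_form; cbv beta iota zeta delta [normZl det3 Zl_mul Zl_one Zl_lam]. ring. Qed.

(* The coordinates of N(u)/u: first column of the adjugate of multiplication by u. *)
Definition Zl_adj (u : Zl) : Zl :=
  let '(a, b, c) := u in
  (((a - c) * (a - b) - (2 * c - b) * (b - c))%Z,
   (- (b * (a - b) - (2 * c - b) * c))%Z,
   (b * (b - c) - (a - c) * c)%Z).

Lemma Zl_mul_adj u : Zl_mul u (Zl_adj u) = Zl_const (normZl u).
Proof.
  destruct u as [[a b] c]. rewrite normZl_norm_form. unfold Zl_mul, Zl_adj, Zl_const, norm_form.
  f_equal; [f_equal|]; ring.
Qed.

(* 3 is inert in Z[lambda]: the norm form has no nontrivial zero mod 3. *)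
Lemma norm_form_divisible_by_3 a b c :
  (3 | norm_form a b c)%Z -> (3 | a)%Z /\ (3 | b)%Z /\ (3 | c)%Z.
Proof.
  intros H. apply Z.mod_divide in H; [|lia].
  assert (Hred : eqm 3 (norm_form (a mod 3) (b mod 3) (c mod 3)) (norm_form a b c))
    by (unfold norm_form; rewrite !Zmod_eqm; reflexivity).
  unfold eqm in Hred. rewrite <- Hred in H. clear Hred.
  rewrite <- !Z.mod_divide by lia.
  pose proof (Z.mod_pos_bound a 3 ltac:(lia)) as Ha.
  pose proof (Z.mod_pos_bound b 3 ltac:(lia)) as Hb.
  pose proof (Z.mod_pos_bound c 3 ltac:(lia)) as Hc.
  revert H Ha Hb Hc; generalize (a mod 3)%Z (b mod 3)%Z (c mod 3)%Z.
  intros ra rb rc H Ha Hb Hc.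
  assert (Hres : forall r, (0 <= r < 3)%Z -> r = 0%Z \/ r = 1%Z \/ r = 2%Z) by lia.
  destruct (Hres ra Ha) as [-> | [-> | ->]];
  destruct (Hres rb Hb) as [-> | [-> | ->]];
  destruct (Hres rc Hc) as [-> | [-> | ->]];
  vm_compute in H; lia.
Qed.

Lemma norm_form_eq0 a b c : norm_form a b c = 0%Z -> a = 0%Z /\ b = 0%Z /\ c = 0%Z.
Proof.
  remember (Z.to_nat (Z.abs a + Z.abs b + Z.abs c)) as k eqn:Hk.
  revert a b c Hk. induction k as [k IH] using lt_wf_ind. intros a b c -> H0.
  destruct (norm_form_divisible_by_3 a b c) as [[a' ->] [[b' ->] [c' ->]]];
    [rewrite H0; apply Z.divide_0_r|].
  assert (H0' : norm_form a' b' c' = 0%Z).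
  { assert (E : norm_form (a' * 3) (b' * 3) (c' * 3) = (27 * norm_form a' b' c')%Z) by (unfold norm_form; ring).
    lia. }
  destruct (Z.eq_dec (Z.abs a' + Z.abs b' + Z.abs c') 0) as [Hz | Hz]; [lia|].
  assert (Hlt : (Z.to_nat (Z.abs a' + Z.abs b' + Z.abs c')
                < Z.to_nat (Z.abs (a' * 3) + Z.abs (b' * 3) + Z.abs (c' * 3)))%nat) by lia.
  destruct (IH _ Hlt a' b' c' eq_refl H0') as (-> & -> & ->). lia.
Qed.

Lemma normZl_eq0 u : normZl u = 0%Z -> u = Zl_const 0.
Proof.
  destruct u as [[a b] c]. rewrite normZl_norm_form.
  intros [-> [-> ->]]%norm_form_eq0. reflexivity.
Qed.

Lemma evalZl_inj u v : evalZl u = evalZl v -> u = v.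
Proof.
  intros Huv.
  assert (Hnorm : normZl (Zl_sub u v) = 0%Z).
  { apply eq_IZR. rewrite <- evalZl_const, <- Zl_mul_adj, evalZl_mul, evalZl_sub, Huv. ring. }
  apply normZl_eq0 in Hnorm.
  destruct u as [[a0 a1] a2], v as [[b0 b1] b2]. injection Hnorm; intros.
  f_equal; [f_equal|]; lia.
Qed.

Definition ideal_gen (n : nat) : Zl := Zl_sub Zl_one (Zl_pow Zl_omega n).

Lemma evalZl_ideal_gen n : evalZl (ideal_gen n) = 1 - omega ^ n.
Proof. unfold ideal_gen. rewrite evalZl_sub, evalZl_omega_pow. simpl. ring. Qed.

Lemma in_idealP n m : in_ideal n m <-> exists y, Zl_const m = Zl_mul (ideal_gen n) y.
Proof.
  unfold in_ideal. split; intros [y Hy]; exists y.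
  - apply evalZl_inj. rewrite evalZl_const, evalZl_mul, evalZl_ideal_gen. exact Hy.
  - rewrite <- evalZl_const, Hy, evalZl_mul, evalZl_ideal_gen. reflexivity.
Qed.

Lemma in_ideal_sub_mul n a b q :
  in_ideal n a -> in_ideal n b -> in_ideal n (a - q * b).
Proof.
  intros [ya Ha] [yb Hb]. exists (Zl_sub ya (Zl_mul (Zl_const q) yb)).
  rewrite evalZl_sub, evalZl_mul, evalZl_const, minus_IZR, mult_IZR, Ha, Hb. ring.
Qed.

Lemma in_ideal_abs n m : in_ideal n m -> in_ideal n (Z.abs m).
Proof.
  intros Hm. destruct (Z.abs_eq_or_opp m) as [-> | ->]; [exact Hm|].
  replace (- m)%Z with (m - 2 * m)%Z by ring. exact (in_ideal_sub_mul _ _ _ _ Hm Hm).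
Qed.

Lemma in_ideal_norm n : in_ideal n (normZl (ideal_gen n)).
Proof.
  apply in_idealP. exists (Zl_adj (ideal_gen n)). rewrite Zl_mul_adj. reflexivity.
Qed.

Lemma normZl_ideal_gen_neq0 n : (1 <= n)%nat -> normZl (ideal_gen n) <> 0%Z.
Proof.
  intros Hn Hnorm%normZl_eq0.
  pose proof (evalZl_ideal_gen n) as E. rewrite Hnorm, evalZl_const in E.
  pose proof omega_bounds.
  assert (omega ^ n < 1) by (apply pow_lt_1_compat; [lra | lia]).
  lra.
Qed.

Lemma Z_least_positive (P : Z -> Prop) :
  (exists m, (0 < m)%Z /\ P m) ->
  exists M, (0 < M)%Z /\ P M /\ forall m, (0 < m)%Z -> P m -> (M <= m)%Z.
Proof.
  intros [m [Hm HPm]].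
  destruct (dec_inh_nat_subset_has_unique_least_element (fun k => P (Z.of_nat (S k))))
    as [k [[HPk Hmin] _]].
  - intros k. apply classic.
  - exists (Z.to_nat m - 1)%nat. replace (Z.of_nat _) with m by lia. exact HPm.
  - exists (Z.of_nat (S k)). split; [lia | split; [exact HPk|]].
    intros m' Hm' HPm'.
    enough (k <= Z.to_nat m' - 1)%nat by lia.
    apply Hmin. replace (Z.of_nat _) with m' by lia. exact HPm'.
Qed.

Lemma is_Mn_exists n : (1 <= n)%nat -> exists M, is_Mn n M.
Proof.
  intros Hn. apply Z_least_positive.
  exists (Z.abs (normZl (ideal_gen n))). split.
  - pose proof (normZl_ideal_gen_neq0 n Hn). lia.
  - apply in_ideal_abs, in_ideal_norm.
Qed.

Lemma is_Mn_divides n M m : is_Mn n M -> in_ideal n m -> (M | m)%Z.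
Proof.
  intros [HM [HMI Hmin]] Hm.
  apply Z.mod_divide; [lia|].
  pose proof (Z.mod_pos_bound m M HM).
  assert (Hr : in_ideal n (m mod M)).
  { rewrite Z.mod_eq, Z.mul_comm by lia. exact (in_ideal_sub_mul _ _ _ _ Hm HMI). }
  destruct (Z.eq_dec (m mod M) 0) as [E | E]; [exact E|].
  specialize (Hmin (m mod M)%Z ltac:(lia) Hr). lia.
Qed.

Definition Zl_evalZ (r : Z) (u : Zl) : Z :=
  let '(a, b, c) := u in (a + b * r + c * r ^ 2)%Z.

Lemma Zl_evalZ_sub r u v : Zl_evalZ r (Zl_sub u v) = (Zl_evalZ r u - Zl_evalZ r v)%Z.
Proof. destruct u as [[a0 a1] a2], v as [[b0 b1] b2]; simpl; ring. Qed.

Section Reduction.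

Variables d r : Z.
Hypothesis d_pos : (0 < d)%Z.
Hypothesis root_mod_d : (d | r ^ 3 + r ^ 2 + r - 1)%Z.

Lemma Zl_evalZ_mul u v :
  eqm d (Zl_evalZ r (Zl_mul u v)) (Zl_evalZ r u * Zl_evalZ r v).
Proof.
  destruct root_mod_d as [k Hk].
  destruct u as [[a0 a1] a2], v as [[b0 b1] b2].
  assert (E : Zl_evalZ r (Zl_mul (a0, a1, a2) (b0, b1, b2))
    = (Zl_evalZ r (a0, a1, a2) * Zl_evalZ r (b0, b1, b2)
       + (- (a1 * b2 + a2 * b1 + (r - 1) * (a2 * b2)) * k) * d)%Z).
  { transitivity (Zl_evalZ r (a0, a1, a2) * Zl_evalZ r (b0, b1, b2)
      - (r ^ 3 + r ^ 2 + r - 1) * (a1 * b2 + a2 * b1 + (r - 1) * (a2 * b2)))%Z.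
    - cbv beta iota zeta delta [Zl_evalZ Zl_mul]. ring.
    - rewrite Hk. ring. }
  unfold eqm. rewrite E. apply Z_mod_plus_full.
Qed.

Lemma Zl_evalZ_pow u n :
  eqm d (Zl_evalZ r (Zl_pow u n)) (Zl_evalZ r u ^ Z.of_nat n).
Proof.
  induction n as [|n IH]; [reflexivity|].
  change (Zl_pow u (S n)) with (Zl_mul u (Zl_pow u n)).
  rewrite Zl_evalZ_mul, IH, Nat2Z.inj_succ, Z.pow_succ_r by lia.
  reflexivity.
Qed.

Lemma in_ideal_divisible n m :
  eqm d (Zl_evalZ r Zl_omega ^ Z.of_nat n) 1 -> in_ideal n m -> (d | m)%Z.
Proof.
  intros Homega [y Hy]%in_idealP.
  assert (E : eqm d m (Zl_evalZ r (Zl_mul (ideal_gen n) y))).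
  { rewrite <- Hy. unfold eqm; simpl; f_equal; ring. }
  unfold ideal_gen in E.
  rewrite Zl_evalZ_mul, Zl_evalZ_sub, Zl_evalZ_pow, Homega in E.
  apply Z.mod_divide; [lia|]. exact E.
Qed.

End Reduction.

Lemma in_ideal_even n m : in_ideal n m -> (2 | m)%Z.
Proof.
  apply (in_ideal_divisible 2 1); [lia | exists 1%Z; reflexivity |].
  change (Zl_evalZ 1 Zl_omega) with (-1)%Z.
  assert (Hm1 : eqm 2 (-1) 1) by (unfold eqm; reflexivity).
  rewrite Hm1, Z.pow_1_l by lia. reflexivity.
Qed.

Lemma in_ideal_even_index_divisible_7 n m :
  Nat.Even n -> in_ideal n m -> (7 | m)%Z.
Proof.
  intros [k ->]. apply (in_ideal_divisible 7 5); [lia | exists 22%Z; reflexivity |].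
  change (Zl_evalZ 5 Zl_omega) with (-29)%Z.
  rewrite Nat2Z.inj_mul, Z.pow_mul_r by lia.
  assert (Hsq : eqm 7 ((-29) ^ Z.of_nat 2) 1) by (unfold eqm; reflexivity).
  rewrite Hsq, Z.pow_1_l by lia. reflexivity.
Qed.

Lemma digit_in_Zl jt : exists e, digit jt = evalZl e.
Proof.
  destruct jt as [j t]. unfold digit; simpl.
  induction t as [|t [e IH]].
  - exists (Zl_const 0). rewrite evalZl_const. reflexivity.
  - exists (Zl_add e (tau (p j t))). simpl. rewrite IH, evalZl_add. reflexivity.
Qed.

Lemma iter_gamma_Zl x k : exists z, Nat.iter k gamma x * omega ^ k = x - evalZl z.
Proof.
  pose proof omega_bounds.
  induction k as [|k [z IH]].
  - exists (Zl_const 0). rewrite evalZl_const. simpl. ring.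
  - set (y := Nat.iter k gamma x) in *.
    change (Nat.iter (S k) gamma x) with (gamma y).
    unfold gamma. destruct (digit_in_Zl (code y 0%nat)) as [e ->].
    exists (Zl_add z (Zl_mul e (Zl_pow Zl_omega k))).
    rewrite evalZl_add, evalZl_mul, evalZl_omega_pow.
    transitivity ((y - evalZl e) * omega ^ k); [simpl; field; lra|].
    rewrite Rmult_minus_distr_r, IH. ring.
Qed.

Lemma periodic_point_scaled n M x :
  M <> 0%Z -> in_ideal n M -> Nat.iter n gamma x = x ->
  exists y, x = evalZl y / IZR M.
Proof.
  intros HM [y Hy] Hx.
  destruct (iter_gamma_Zl x n) as [z Hz]. rewrite Hx in Hz.
  exists (Zl_mul z y).
  assert (Ez : evalZl z = x * (1 - omega ^ n)) by lra.
  rewrite evalZl_mul, Ez, Rmult_assoc, <- Hy.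
  field. apply not_0_IZR. exact HM.
Qed.

Theorem mainTheorem7 (n : nat) (hn : (1 <= n)%nat) :
  exists M : Z,
    is_Mn n M /\
    Z.Even M /\
    (Nat.Even n -> (14 | M)%Z) /\
    (M | normZl (Zl_sub Zl_one (Zl_pow Zl_omega n)))%Z /\
    (forall x : R, 0 <= x < 1 -> Nat.iter n gamma x = x ->
       exists y : Zl, x = evalZl y / IZR M).
Proof.
  destruct (is_Mn_exists n hn) as [M HM].
  pose proof HM as (HM0 & HMI & _).
  destruct (in_ideal_even n M HMI) as [h Hh].
  exists M. refine (conj HM (conj _ (conj _ (conj _ _)))).
  - exists h. lia.
  - intros Hn. change 14%Z with (Z.lcm 2 7).
    apply Z.lcm_least; [exists h; exact Hh|].
    exact (in_ideal_even_index_divisible_7 n M Hn HMI).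
  - exact (is_Mn_divides n M _ HM (in_ideal_norm n)).
  - intros x _ Hx. apply (periodic_point_scaled n); [lia | exact HMI | exact Hx].
Qed.
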